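(* Let $u:\Gamma\to\mathbb R$ be a subsolution of $(HJ_c)$ on $\Gamma$. Then for every $e\in\mathcal A^*_{\mathbf X}$, setting $\gamma=\Psi(e)$, $$u(\gamma(s))=u(\gamma(0))+\int_0^s\sigma^+_{c,\gamma}(t)\,dt\qquad\text{for all }s\in[0,1].$$ In particular $u$ is of class $C^1$ on $\mathcal A_\Gamma\setminus\mathbf V$, and all subsolutions of $(HJ_c)$ have the same differential there: for $x=\gamma(s_0)$, $s_0\in(0,1)$, $D_\Gamma u(x)$ is the unique covector with $(D_\Gamma u(x),\dot\gamma(s_0))=\sigma^+_{c,\gamma}(s_0)$.
   Context: Network $\Gamma=\bigcup_{\gamma\in\mathcal E}\gamma([0,1])\subset\mathbb R^N$: finite set $\mathcal E$ of regular simple oriented arcs (possibly closed), closed under inversion $\tilde\gamma(s)=\gamma(1-s)$, interiors pairwise disjoint except $\gamma,\tilde\gamma$; vertices $\mathbf V$; connected. Hamiltonians $H_\gamma$, $H_{\tilde\gamma}(s,p)=H_\gamma(1-s,-p)$, continuous, coercive, quasiconvex with $\mathrm{Int}\{H_\gamma(s,\cdot)\le b\}=\{H_\gamma(s,\cdot)<b\}$; $a_\gamma=\max_s\min_pH_\gamma$, $c_\gamma$ = least level with a periodic viscosity subsolution, $a_0=\max\{\max_{\gamma\text{ not closed}}a_\gamma,\max_{\gamma\text{ closed}}c_\gamma\}$, $\min_pH_\gamma(s,p)$ constant whenever $a_\gamma=a_0$. $\sigma^+_{a,\gamma}(s)=\max\{p:H_\gamma(s,p)=a\}$. Subsolution of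 $(HJ_a)$ on $\Gamma$: continuous $u$ with each $u\circ\gamma$ a viscosity subsolution of $H_\gamma(s,w')=a$ in $(0,1)$. Graph $\mathbf X=(\mathbf V,\mathbf E)$, bijection $\Psi:\mathbf E\to\mathcal E$, $\mathrm o(e)=\Psi(e)(0)$, $\mathrm t(e)=\Psi(e)(1)$, $-e=\Psi^{-1}(\widetilde{\Psi(e)})$, $\sigma_a(e)=\int_0^1\sigma^+_{a,\Psi(e)}$; cycles $\xi=(e_1,\dots,e_M)$ with $\mathrm t(e_j)=\mathrm o(e_{j+1})$, $\mathrm t(e_M)=\mathrm o(e_1)$, $\sigma_a(\xi)=\sum\sigma_a(e_i)$; $c=\min\{a\ge a_0:\exists u:\mathbf V\to\mathbb R,\ u(\mathrm t(e))-u(\mathrm o(e))\le\sigma_a(e)\ \forall e\}$; $\mathcal A^*_{\mathbf X}=\{e$ belonging to a cycle $\xi$ with $\sigma_c(\xi)=0\}$, $\mathcal A_\Gamma=\bigcup_{e\in\mathcal A^*_{\mathbf X}}\Psi(e)([0,1])$. For $x=\gamma(s_0)\in\Gamma\setminus\mathbf V$, $T_\Gamma(x)=\mathbb R\dot\gamma(s_0)$ and, for $f$ with $f\circ\gamma$ differentiable at $s_0$, $D_\Gamma f(x)\in T_\Gamma(x)^*$ is defined by $(D_\Gamma f(x),\dot\gamma(s_0))=(f\circ\gamma)'(s_0)$. *)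

From Stdlib Require Import Reals Lra List ClassicalEpsilon.
From Stdlib Require Fin.
Open Scope R_scope.

Definition Vec (N : nat) := Fin.t N -> R.

(** sup-norm neighbourhood (induces the usual topology of R^N) *)
Definition near {N} (x y : Vec N) (d : R) : Prop := forall i, Rabs (x i - y i) < d.

Definition I01 (s : R) : Prop := 0 <= s <= 1.
Definition I01o (s : R) : Prop := 0 < s < 1.

(** f is C^1 on [0,1] with derivative df (one-sided at the endpoints). *)
Definition C1_on01 (f df : R -> R) : Prop :=
  (forall s, I01 s -> forall eps, 0 < eps -> exists delta, 0 < delta /\
     forall h, h <> 0 -> Rabs h < delta -> I01 (s + h) ->
       Rabs ((f (s + h) - f s) / h - df s) < eps) /\
  (forall s, I01 s -> forall eps, 0 < eps -> exists delta, 0 < delta /\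
     forall t, I01 t -> Rabs (t - s) < delta -> Rabs (df t - df s) < eps).

Definition regular_arc {N} (g : R -> Vec N) : Prop :=
  exists dg : R -> Vec N,
    (forall i, C1_on01 (fun s => g s i) (fun s => dg s i)) /\
    (forall s, I01 s -> exists i, dg s i <> 0).

Definition simple_arc {N} (g : R -> Vec N) : Prop :=
  forall s s', I01 s -> I01 s' -> g s = g s' ->
    s = s' \/ (s = 0 /\ s' = 1) \/ (s = 1 /\ s' = 0).

Definition closed_arc {N} (g : R -> Vec N) : Prop := g 0 = g 1.

Definition in_network {N} {Ed : Type} (arc : Ed -> R -> Vec N) (x : Vec N) : Prop :=
  exists e s, I01 s /\ arc e s = x.

Definition rel_open {N} {Ed : Type} (arc : Ed -> R -> Vec N) (P : Vec N -> Prop) : Prop :=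
  forall x, in_network arc x -> P x ->
    exists d, 0 < d /\ forall y, in_network arc y -> near x y d -> P y.

Definition network_connected {N} {Ed : Type} (arc : Ed -> R -> Vec N) : Prop :=
  forall P : Vec N -> Prop, rel_open arc P -> rel_open arc (fun x => ~ P x) ->
    (forall x, in_network arc x -> P x) \/ (forall x, in_network arc x -> ~ P x).

(** The network: edges of the abstract graph X are the elements of the finite
    type Ed (enumerated by [edges]); [arc] is the bijection Psi onto the set of
    arcs, [rev e] is -e, i.e. Psi(-e) is the inverse arc of Psi(e). *)
Definition is_network (N : nat) (Ed : Type) (edges : list Ed)
  (arc : Ed -> R -> Vec N) (rev : Ed -> Ed) : Prop :=
  (forall e, In e edges) /\
  (forall e, regular_arc (arc e) /\ simple_arc (arc e)) /\
  (forall e s, I01 s -> arc (rev e) s = arc e (1 - s)) /\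
  (forall e e', (forall s, I01 s -> arc e s = arc e' s) -> e = e') /\
  (forall e e' s s', I01o s -> I01o s' -> arc e s = arc e' s' -> e' = e \/ e' = rev e) /\
  network_connected arc.

Definition ham_cont (H : R -> R -> R) : Prop :=
  forall s p, I01 s -> forall eps, 0 < eps -> exists d, 0 < d /\
    forall s' p', I01 s' -> Rabs (s' - s) < d -> Rabs (p' - p) < d ->
      Rabs (H s' p' - H s p) < eps.
Definition ham_coercive (H : R -> R -> R) : Prop :=
  forall M, exists K, forall s p, I01 s -> K < Rabs p -> M < H s p.
Definition ham_quasiconvex (H : R -> R -> R) : Prop :=
  forall s, I01 s -> forall p q l, 0 <= l <= 1 ->
    H s (l * p + (1 - l) * q) <= Rmax (H s p) (H s q).
Definition ham_int_sublevel (H : R -> R -> R) : Prop :=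
  forall s b p, I01 s ->
    ((exists d, 0 < d /\ forall q, Rabs (q - p) < d -> H s q <= b) <-> H s p < b).
Definition ham_ok (H : R -> R -> R) : Prop :=
  ham_cont H /\ ham_coercive H /\ ham_quasiconvex H /\ ham_int_sublevel H.

(** a = max_s min_p H(s,p) *)
Definition is_max_min (H : R -> R -> R) (a : R) : Prop :=
  (forall s, I01 s -> exists p, H s p <= a) /\
  (exists s, I01 s /\ forall p, a <= H s p).

Definition visc_sub (H : R -> R -> R) (a : R) (D : R -> Prop) (w : R -> R) : Prop :=
  forall s0, D s0 ->
    continuity_pt w s0 /\
    forall phi dphi : R -> R,
      (forall x, derivable_pt_lim phi x (dphi x)) -> continuity dphi ->
      (exists r, 0 < r /\ forall s, Rabs (s - s0) < r -> w s - phi s <= w s0 - phi s0) ->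
      H s0 (dphi s0) <= a.

(** existence of a 1-periodic viscosity subsolution of H(s,w')=a on R
    (H extended 1-periodically in s) *)
Definition has_periodic_sub (H : R -> R -> R) (a : R) : Prop :=
  exists w : R -> R, (forall s, w (s + 1) = w s) /\
    visc_sub (fun s p => H (frac_part s) p) a (fun _ => True) w.

Definition is_least_periodic_level (H : R -> R -> R) (c : R) : Prop :=
  has_periodic_sub H c /\ forall a, has_periodic_sub H a -> c <= a.

Definition sigma_plus (H : R -> R -> R) (a s : R) : R :=
  epsilon (inhabits 0) (fun p => H s p = a /\ forall q, H s q = a -> q <= p).

(** Riemann integral of f on [a,b] (0 if f is not Riemann integrable) *)
Definition Rint (f : R -> R) (a b : R) : R :=
  match excluded_middle_informative (inhabited (Riemann_integrable f a b)) with
  | left h => RiemannInt (epsilon h (fun _ => True))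
  | right _ => 0
  end.

Definition ham_family {N} {Ed : Type} (arc : Ed -> R -> Vec N) (rev : Ed -> Ed)
  (H : Ed -> R -> R -> R) (a_ c_ : Ed -> R) (a0 : R) : Prop :=
  (forall e, ham_ok (H e)) /\
  (forall e s p, I01 s -> H (rev e) s p = H e (1 - s) (- p)) /\
  (forall e, is_max_min (H e) (a_ e)) /\
  (forall e, closed_arc (arc e) -> is_least_periodic_level (H e) (c_ e)) /\
  (forall e, (closed_arc (arc e) -> c_ e <= a0) /\ (~ closed_arc (arc e) -> a_ e <= a0)) /\
  (exists e, (closed_arc (arc e) /\ a0 = c_ e) \/ (~ closed_arc (arc e) /\ a0 = a_ e)) /\
  (forall e, a_ e = a0 ->
     exists m, forall s, I01 s -> (forall p, m <= H e s p) /\ exists p, H e s p = m).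

Definition sigma_edge {Ed : Type} (H : Ed -> R -> R -> R) (a : R) (e : Ed) : R :=
  Rint (sigma_plus (H e) a) 0 1.

Definition is_cycle {N} {Ed : Type} (arc : Ed -> R -> Vec N) (xi : list Ed) : Prop :=
  xi <> nil /\
  forall j d, (j < length xi)%nat ->
    arc (nth j xi d) 1 = arc (nth (Nat.modulo (S j) (length xi)) xi d) 0.

Definition sigma_cycle {Ed : Type} (H : Ed -> R -> R -> R) (a : R) (xi : list Ed) : R :=
  fold_right (fun e acc => sigma_edge H a e + acc) 0 xi.

Definition admissible_level {N} {Ed : Type} (arc : Ed -> R -> Vec N)
  (H : Ed -> R -> R -> R) (a : R) : Prop :=
  exists phi : Vec N -> R, forall e, phi (arc e 1) - phi (arc e 0) <= sigma_edge H a e.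

Definition is_critical {N} {Ed : Type} (arc : Ed -> R -> Vec N)
  (H : Ed -> R -> R -> R) (a0 c : R) : Prop :=
  a0 <= c /\ admissible_level arc H c /\
  forall a, a0 <= a -> admissible_level arc H a -> c <= a.

Definition aubry_edge {N} {Ed : Type} (arc : Ed -> R -> Vec N)
  (H : Ed -> R -> R -> R) (c : R) (e : Ed) : Prop :=
  exists xi, is_cycle arc xi /\ In e xi /\ sigma_cycle H c xi = 0.

Definition cont_on_network {N} {Ed : Type} (arc : Ed -> R -> Vec N) (u : Vec N -> R) : Prop :=
  forall x, in_network arc x -> forall eps, 0 < eps -> exists d, 0 < d /\
    forall y, in_network arc y -> near x y d -> Rabs (u y - u x) < eps.

Definition network_sub {N} {Ed : Type} (arc : Ed -> R -> Vec N)
  (H : Ed -> R -> R -> R) (a : R) (u : Vec N -> R) : Prop :=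
  cont_on_network arc u /\ forall e, visc_sub (H e) a I01o (fun s => u (arc e s)).

From Stdlib Require Import Reals List Lra Psatz Rtopology ClassicalEpsilon Classical.
From Stdlib Require Fin.
From Coquelicot Require Import Coquelicot.
Open Scope R_scope.

(* A viscosity subsolution [w] of [H(s, w') = c] on an arc cannot grow faster than the
   primitive of [sigma^+]: otherwise a test function whose slope exceeds [sigma^+] would touch
   [w] from above at an interior point, where [H > c]. So the increment of [u] along each edge
   is at most [sigma_c(e)]. Along a cycle these increments telescope to 0, while on a cycle
   with [sigma_c(xi) = 0] the bounds also sum to 0; hence every edge of the cycle is tight, and
   tightness on [0, 1] forces equality on each [0, s]. The subsolution itself guarantees that
   the sublevel sets [{H(s, .) <= c}] are nonempty, so [sigma^+] is well defined and
   continuous. *)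

Lemma continuity_pt_eps (f : R -> R) x :
  continuity_pt f x <->
  forall eps, 0 < eps -> exists d, 0 < d /\
    forall y, Rabs (y - x) < d -> Rabs (f y - f x) < eps.
Proof.
  unfold continuity_pt, continue_in, limit1_in, limit_in; simpl; unfold R_dist.
  split; intros Hf eps Heps; destruct (Hf eps Heps) as [d [Hd Hy]];
    exists d; split; auto.
  - intros y Hyx. destruct (Req_dec y x) as [->|Hne].
    + rewrite Rminus_diag, Rabs_R0; auto.
    + apply Hy. repeat split; auto.
  - intros y [_ Hyx]. auto.
Qed.

Definition continuous_on01 (f : R -> R) : Prop :=
  forall s, I01 s -> forall eps, 0 < eps -> exists d, 0 < d /\
    forall t, I01 t -> Rabs (t - s) < d -> Rabs (f t - f s) < eps.

Lemma continuous_on01_interior f s :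
  continuous_on01 f -> I01o s -> continuity_pt f s.
Proof.
  intros Hf Hs. apply continuity_pt_eps. intros eps Heps.
  destruct (Hf s ltac:(unfold I01, I01o in *; lra) eps Heps) as [d [Hd Hfd]].
  exists (Rmin d (Rmin s (1 - s))). split.
  { unfold I01o in Hs. repeat apply Rmin_pos; lra. }
  intros t Ht. pose proof (Rmin_l d (Rmin s (1 - s))).
  pose proof (Rmin_r d (Rmin s (1 - s))).
  pose proof (Rmin_l s (1 - s)). pose proof (Rmin_r s (1 - s)).
  apply Rabs_def2 in Ht as Ht'. apply Hfd; [unfold I01|]; lra.
Qed.

Lemma C1_on01_continuous f df : C1_on01 f df -> continuous_on01 f.
Proof.
  intros [Hd _] s Hs eps Heps.
  destruct (Hd s Hs 1 Rlt_0_1) as [del [Hdel Hq]].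
  set (k := Rabs (df s) + 1).
  assert (Hk : 0 < k) by (unfold k; pose proof (Rabs_pos (df s)); lra).
  exists (Rmin del (eps / k)). split.
  { apply Rmin_pos; auto. apply Rdiv_lt_0_compat; auto. }
  intros t Ht Hts. destruct (Req_dec t s) as [->|Hne].
  { rewrite Rminus_diag, Rabs_R0; auto. }
  pose proof (Rmin_l del (eps / k)). pose proof (Rmin_r del (eps / k)).
  assert (Hh : 0 < Rabs (t - s)) by (apply Rabs_pos_lt; lra).
  specialize (Hq (t - s) ltac:(lra) ltac:(lra)).
  replace (s + (t - s)) with t in Hq by ring. specialize (Hq Ht).
  assert (Hquot : Rabs (f t - f s) / Rabs (t - s) < k).
  { rewrite <- Rabs_div by lra. unfold k.
    pose proof (Rabs_triang_inv ((f t - f s) / (t - s)) (df s)). lra. }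
  apply Rmult_lt_compat_r with (r := Rabs (t - s)) in Hquot; [|lra].
  unfold Rdiv in Hquot. rewrite Rmult_assoc, Rinv_l, Rmult_1_r in Hquot by lra.
  apply Rlt_le_trans with (k * Rabs (t - s)); [lra|].
  apply Rle_trans with (k * (eps / k)); [apply Rmult_le_compat_l; lra|].
  right; field; lra.
Qed.

Lemma fin_forall_delta (N : nat) (P : Fin.t N -> R -> Prop) :
  (forall i d d', 0 < d' <= d -> P i d -> P i d') ->
  (forall i, exists d, 0 < d /\ P i d) -> exists d, 0 < d /\ forall i, P i d.
Proof.
  induction N as [|N IH]; intros Hmon Hex.
  - exists 1. split; [lra|]. intros i. exact (Fin.case0 (fun i => P i 1) i).
  - destruct (Hex Fin.F1) as [d0 [Hd0 HP0]].
    destruct (IH (fun i => P (Fin.FS i))) as [d1 [Hd1 HP1]];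
      [intros i; apply Hmon | intros i; apply Hex |].
    exists (Rmin d0 d1). split; [apply Rmin_pos; auto|].
    pose proof (Rmin_l d0 d1). pose proof (Rmin_r d0 d1).
    pose proof (Rmin_pos d0 d1 Hd0 Hd1).
    intros i. apply (Fin.caseS' i (fun i => P i (Rmin d0 d1))).
    + eapply Hmon; [|exact HP0]. lra.
    + intros p. eapply Hmon; [|exact (HP1 p)]. lra.
Qed.

Lemma regular_arc_continuous N (g : R -> Vec N) : regular_arc g ->
  forall s, I01 s -> forall d, 0 < d ->
  exists del, 0 < del /\ forall t, I01 t -> Rabs (t - s) < del -> near (g s) (g t) d.
Proof.
  intros [dg [Hc _]] s Hs d Hd.
  destruct (fin_forall_delta N
              (fun i del => forall t, I01 t -> Rabs (t - s) < del -> Rabs (g s i - g t i) < d))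
    as [del [Hdel Hnear]].
  - intros i a b Hab Hp t Ht Hts. apply Hp; auto. lra.
  - intros i. destruct (C1_on01_continuous _ _ (Hc i) s Hs d Hd) as [del [Hdel Hi]].
    exists del. split; auto. intros t Ht Hts. rewrite Rabs_minus_sym. auto.
  - exists del. split; auto. intros t Ht Hts i. auto.
Qed.

Lemma cont_on_network_along_arc N Ed edges arc rev (u : Vec N -> R) (e : Ed) :
  is_network N Ed edges arc rev -> cont_on_network arc u ->
  continuous_on01 (fun s => u (arc e s)).
Proof.
  intros [_ [Hreg _]] Hu s Hs eps Heps.
  destruct (Hu (arc e s) (ex_intro _ e (ex_intro _ s (conj Hs eq_refl))) eps Heps)
    as [d [Hd Hy]].
  destruct (regular_arc_continuous N (arc e) (proj1 (Hreg e)) s Hs d Hd) as [del [Hdel Hnear]].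
  exists del. split; auto. intros t Ht Hts. apply Hy; [exists e, t|]; auto.
Qed.

Definition clamp01 t := Rmax 0 (Rmin t 1).

Lemma clamp01_I01 t : I01 (clamp01 t).
Proof. unfold clamp01, I01, Rmax, Rmin. repeat destruct Rle_dec; lra. Qed.

Lemma clamp01_id t : I01 t -> clamp01 t = t.
Proof. unfold clamp01, I01, Rmax, Rmin. intros. repeat destruct Rle_dec; lra. Qed.

Lemma clamp01_lipschitz x y : Rabs (clamp01 x - clamp01 y) <= Rabs (x - y).
Proof.
  unfold clamp01, Rmax, Rmin. repeat destruct Rle_dec; unfold Rabs; repeat destruct Rcase_abs; lra.
Qed.

Lemma continuity_clamp01 f : continuous_on01 f -> continuity (fun t => f (clamp01 t)).
Proof.
  intros Hf x. apply continuity_pt_eps. intros eps Heps.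
  destruct (Hf (clamp01 x) (clamp01_I01 x) eps Heps) as [d [Hd Hfd]].
  exists d. split; auto. intros y Hy. apply Hfd; [apply clamp01_I01|].
  eapply Rle_lt_trans; [apply clamp01_lipschitz| exact Hy].
Qed.

Section LevelSet.
Variables (h : R -> R -> R) (a : R).
Hypothesis Hok : ham_ok h.

Lemma ham_continuous_in_p s : I01 s -> continuity (h s).
Proof.
  intros Hs q. apply continuity_pt_eps. intros eps Heps.
  destruct (proj1 Hok s q Hs eps Heps) as [d [Hd Hhd]].
  exists d. split; auto. intros p Hp. apply Hhd; auto.
  rewrite Rminus_diag, Rabs_R0; auto.
Qed.

Lemma ham_continuous_in_s s p : I01 s -> forall eta, 0 < eta -> exists d, 0 < d /\
  forall t, I01 t -> Rabs (t - s) < d -> Rabs (h t p - h s p) < eta.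
Proof.
  intros Hs eta Heta. destruct (proj1 Hok s p Hs eta Heta) as [d [Hd Hhd]].
  exists d. split; auto. intros t Ht Hts. apply Hhd; auto.
  rewrite Rminus_diag, Rabs_R0; auto.
Qed.

Lemma ham_above_level_eventually s : I01 s -> exists K, forall q, K < q -> a < h s q.
Proof.
  intros Hs. destruct (proj1 (proj2 Hok) a) as [K HK].
  exists (Rabs K). intros q Hq. apply HK; auto.
  pose proof (Rle_abs K). pose proof (Rle_abs q). lra.
Qed.

Lemma ham_reaches_level_above s p : I01 s -> h s p <= a -> exists z, p <= z /\ h s z = a.
Proof.
  intros Hs Hp. destruct (ham_above_level_eventually s Hs) as [K HK].
  set (q := Rabs p + Rabs K + 1).
  pose proof (Rle_abs p). pose proof (Rle_abs K).
  pose proof (Rabs_pos p). pose proof (Rabs_pos K).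
  assert (Hq : a < h s q) by (apply HK; unfold q; lra).
  destruct (IVT_cor (fun z => h s z - a) p q) as [z [Hz Hza]].
  - apply continuity_minus; [apply ham_continuous_in_p; auto| apply continuity_const; intros ? ?; auto].
  - unfold q; lra.
  - nra.
  - exists z. split; lra.
Qed.

Lemma ham_level_set_has_max s : I01 s -> (exists p, h s p <= a) ->
  exists m, h s m = a /\ forall q, h s q = a -> q <= m.
Proof.
  intros Hs [p0 Hp0].
  destruct (ham_reaches_level_above s p0 Hs Hp0) as [z [_ Hz]].
  destruct (ham_above_level_eventually s Hs) as [K HK].
  set (E := fun q => h s q = a).
  assert (Hb : bound E).
  { exists K. intros q Hq. apply Rnot_lt_le. intros Hlt. specialize (HK q Hlt). unfold E in Hq. lra. }
  destruct (completeness E Hb (ex_intro _ z Hz)) as [m [Hub Hlub]].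
  exists m. split; [|exact Hub].
  (* the level set is closed, so its supremum belongs to it *)
  apply NNPP. intros Hne.
  destruct (proj1 (continuity_pt_eps _ _) (ham_continuous_in_p s Hs m) (Rabs (h s m - a)))
    as [d [Hd Hy]]; [apply Rabs_pos_lt; lra|].
  destruct (classic (exists q, E q /\ m - d < q)) as [[q [Hq1 Hq2]]|Hno].
  - assert (q <= m) by (apply Hub; auto).
    specialize (Hy q ltac:(apply Rabs_def1; lra)). unfold E in Hq1. rewrite Hq1 in Hy.
    rewrite Rabs_minus_sym in Hy. lra.
  - assert (m <= m - d); [|lra].
    apply Hlub. intros q Hq. apply Rnot_lt_le. intros Hlt. apply Hno. eauto.
Qed.

Lemma sigma_plus_spec s : I01 s -> (exists p, h s p <= a) ->
  h s (sigma_plus h a s) = a /\ forall q, h s q = a -> q <= sigma_plus h a s.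
Proof. intros Hs Hex. unfold sigma_plus. apply epsilon_spec, ham_level_set_has_max; auto. Qed.

Lemma ham_gt_above_sigma_plus s p : I01 s -> (exists p, h s p <= a) ->
  sigma_plus h a s < p -> a < h s p.
Proof.
  intros Hs Hex Hp. apply Rnot_le_lt. intros Hle.
  destruct (ham_reaches_level_above s p Hs Hle) as [z [Hz1 Hz2]].
  pose proof (proj2 (sigma_plus_spec s Hs Hex) z Hz2). lra.
Qed.

Lemma sublevel_le_sigma_plus s q : I01 s -> h s q <= a -> q <= sigma_plus h a s.
Proof.
  intros Hs Hq. apply Rnot_lt_le. intros Hlt.
  pose proof (ham_gt_above_sigma_plus s q Hs (ex_intro _ q Hq) Hlt). lra.
Qed.

Lemma ham_quasiconvex_between s p1 q p2 : I01 s -> p1 <= q <= p2 ->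
  h s q <= Rmax (h s p1) (h s p2).
Proof.
  intros Hs Hq. destruct (Req_dec p1 p2) as [<-|Hne].
  - replace q with p1 by lra. apply Rmax_l.
  - set (l := (p2 - q) / (p2 - p1)).
    assert (Hl : 0 <= l <= 1).
    { unfold l. split; [apply Rdiv_le_0_compat; lra|].
      apply Rmult_le_reg_r with (p2 - p1); [lra|].
      unfold Rdiv. rewrite Rmult_assoc, Rinv_l; lra. }
    replace q with (l * p1 + (1 - l) * p2) by (unfold l; field; lra).
    apply (proj1 (proj2 (proj2 Hok))); auto.
Qed.

Lemma ham_lt_between_sublevel s p1 q p2 : I01 s -> p1 < q < p2 ->
  h s p1 <= a -> h s p2 <= a -> h s q < a.
Proof.
  intros Hs Hq H1 H2. apply (proj1 (proj2 (proj2 (proj2 Hok)) s a q Hs)).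
  exists (Rmin (q - p1) (p2 - q)). split; [apply Rmin_pos; lra|].
  intros q' Hq'. pose proof (Rmin_l (q - p1) (p2 - q)). pose proof (Rmin_r (q - p1) (p2 - q)).
  apply Rabs_def2 in Hq'.
  eapply Rle_trans; [apply (ham_quasiconvex_between s p1 q' p2); auto; lra|].
  apply Rmax_lub; auto.
Qed.

Hypothesis sublevel_nonempty : forall t, I01 t -> exists p, h t p <= a.

Local Notation sg := (sigma_plus h a).

Lemma sigma_plus_level t : I01 t -> h t (sg t) = a.
Proof. intros Ht. exact (proj1 (sigma_plus_spec t Ht (sublevel_nonempty t Ht))). Qed.

(* By quasiconvexity, a momentum [P] where [h s P > a] separates the values of [sg] near [s]. *)
Lemma sigma_plus_not_across s P : I01 s -> a < h s P ->
  exists d, 0 < d /\ forall t, I01 t -> Rabs (t - s) < d ->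
    ~ (Rmin (sg t) (sg s) <= P <= Rmax (sg t) (sg s)).
Proof.
  intros Hs HP. set (eta := (h s P - a) / 2).
  destruct (ham_continuous_in_s s P Hs eta) as [dP [HdP HhP]]; [unfold eta; lra|].
  destruct (ham_continuous_in_s s (sg s) Hs eta) as [ds [Hds Hhs]]; [unfold eta; lra|].
  exists (Rmin dP ds). split; [apply Rmin_pos; auto|].
  intros t Ht Hts HPt. pose proof (Rmin_l dP ds). pose proof (Rmin_r dP ds).
  specialize (HhP t Ht ltac:(lra)). specialize (Hhs t Ht ltac:(lra)).
  apply Rabs_def2 in HhP. apply Rabs_def2 in Hhs. rewrite sigma_plus_level in Hhs by auto.
  assert (Hmax : Rmax (h t (sg t)) (h t (sg s)) < a + eta).
  { rewrite sigma_plus_level by auto. apply Rmax_lub_lt; unfold eta in *; lra. }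
  assert (Hq : h t P <= Rmax (h t (sg t)) (h t (sg s))).
  { destruct (Rle_dec (sg t) (sg s)).
    - rewrite Rmin_left, Rmax_right in HPt by lra. apply ham_quasiconvex_between; auto.
    - rewrite Rmin_right, Rmax_left in HPt by lra. rewrite Rmax_comm.
      apply ham_quasiconvex_between; auto. }
  unfold eta in *. lra.
Qed.

Lemma sigma_plus_upper s eps : I01 s -> 0 < eps ->
  exists d, 0 < d /\ forall t, I01 t -> Rabs (t - s) < d -> sg t < sg s + eps.
Proof.
  intros Hs Heps.
  destruct (sigma_plus_not_across s (sg s + eps) Hs) as [d [Hd Hnot]].
  { apply ham_gt_above_sigma_plus; auto. lra. }
  exists d. split; auto. intros t Ht Hts. apply Rnot_le_lt. intros Hge.
  apply (Hnot t Ht Hts). rewrite Rmin_right, Rmax_left; lra.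
Qed.

Lemma sigma_plus_lower s eps : I01 s -> 0 < eps ->
  exists d, 0 < d /\ forall t, I01 t -> Rabs (t - s) < d -> sg s - eps < sg t.
Proof.
  intros Hs Heps.
  destruct (classic (exists q, sg s - eps < q < sg s /\ h s q < a)) as [[q [Hq Hqa]]|Hno].
  - destruct (ham_continuous_in_s s q Hs (a - h s q)) as [d [Hd Hhd]]; [lra|].
    exists d. split; auto. intros t Ht Hts.
    specialize (Hhd t Ht Hts). apply Rabs_def2 in Hhd.
    pose proof (sublevel_le_sigma_plus t q Ht ltac:(lra)). lra.
  - set (Q := sg s - eps / 2).
    assert (HQ : a < h s Q).
    { apply Rnot_le_lt. intros HQ. apply Hno. exists (sg s - eps / 4). split; [lra|].
      apply (ham_lt_between_sublevel s Q _ (sg s)); auto; [unfold Q; lra|].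
      rewrite sigma_plus_level; auto; lra. }
    destruct (sigma_plus_not_across s Q Hs HQ) as [d [Hd Hnot]].
    exists d. split; auto. intros t Ht Hts.
    apply Rlt_le_trans with Q; [unfold Q; lra|].
    apply Rnot_lt_le. intros Hlt. apply (Hnot t Ht Hts).
    rewrite Rmin_left, Rmax_right; unfold Q in *; lra.
Qed.

Lemma sigma_plus_continuous : continuous_on01 sg.
Proof.
  intros s Hs eps Heps.
  destruct (sigma_plus_upper s eps Hs Heps) as [d1 [Hd1 H1]].
  destruct (sigma_plus_lower s eps Hs Heps) as [d2 [Hd2 H2]].
  exists (Rmin d1 d2). split; [apply Rmin_pos; auto|].
  intros t Ht Hts. pose proof (Rmin_l d1 d2). pose proof (Rmin_r d1 d2).
  specialize (H1 t Ht ltac:(lra)). specialize (H2 t Ht ltac:(lra)).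
  apply Rabs_def1; lra.
Qed.

End LevelSet.

Lemma inv_succ_pos n : 0 < / (INR n + 1).
Proof. apply Rinv_0_lt_compat. pose proof (pos_INR n); lra. Qed.

Lemma inv_succ_eventually_lt d : 0 < d ->
  exists n0, forall n, (n0 <= n)%nat -> / (INR n + 1) < d.
Proof.
  intros Hd. destruct (archimed_cor1 d Hd) as [n0 [Hn0 Hpos]].
  exists n0. intros n Hn. apply le_INR in Hn.
  eapply Rle_lt_trans; [|exact Hn0].
  apply Rinv_le_contravar; [apply lt_0_INR; lia | lra].
Qed.

(* Coercivity confines the momenta to a compact set, so a cluster point exists. *)
Lemma ham_sublevel_closed (h : R -> R -> R) a s : ham_cont h -> ham_coercive h -> I01 s ->
  (forall eps, 0 < eps -> exists t p, I01 t /\ Rabs (t - s) < eps /\ h t p <= a) ->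
  exists p, h s p <= a.
Proof.
  intros Hc Hco Hs Hnear.
  set (P := fun n (tp : R * R) =>
              I01 (fst tp) /\ Rabs (fst tp - s) < / (INR n + 1) /\ h (fst tp) (snd tp) <= a).
  set (tp := fun n => epsilon (inhabits (0, 0)) (P n)).
  assert (Htp : forall n, P n (tp n)).
  { intros n. apply epsilon_spec.
    destruct (Hnear _ (inv_succ_pos n)) as [t [p Htp]]. exists (t, p). exact Htp. }
  destruct (Hco a) as [K HK].
  assert (Hbnd : forall n, -K <= snd (tp n) <= K).
  { intros n. destruct (Htp n) as [Ht [_ Hha]].
    assert (Rabs (snd (tp n)) <= K) by (apply Rnot_lt_le; intros Hlt; specialize (HK _ _ Ht Hlt); lra).
    apply Rabs_le_between; lra. }
  destruct (Bolzano_Weierstrass (fun n => snd (tp n)) _ (compact_P3 (-K) K) Hbnd) as [l Hl].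
  exists l. apply Rnot_lt_le. intros Hlt.
  destruct (Hc s l Hs (h s l - a)) as [d [Hd Hhd]]; [lra|].
  destruct (inv_succ_eventually_lt d Hd) as [n0 Hn0].
  destruct (Hl (fun p => Rabs (p - l) < d) n0) as [m [Hm Hml]].
  { exists (mkposreal d Hd). intros y Hy. exact Hy. }
  destruct (Htp m) as [Ht [Hts Hha]].
  specialize (Hhd _ _ Ht ltac:(specialize (Hn0 m Hm); lra) Hml).
  apply Rabs_def2 in Hhd. lra.
Qed.

Definition sigma_ext (h : R -> R -> R) a t := sigma_plus h a (clamp01 t).

Definition sigma_primitive (h : R -> R -> R) a t := RInt (sigma_ext h a) 0 t.

Lemma sigma_primitive_0 h a : sigma_primitive h a 0 = 0.
Proof. unfold sigma_primitive. rewrite RInt_point. reflexivity. Qed.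

Lemma Rint_RInt f x y : ex_RInt f x y -> Rint f x y = RInt f x y.
Proof.
  intros Hex. unfold Rint. destruct (excluded_middle_informative _) as [Hi|Hn].
  - symmetry. apply RInt_Reals.
  - exfalso. apply Hn. constructor. apply ex_RInt_Reals_0; auto.
Qed.

Lemma pos_part_sqr_derive c t :
  derivable_pt_lim (fun t => Rmax 0 (t - c) * Rmax 0 (t - c)) t (2 * Rmax 0 (t - c)).
Proof.
  intros eps Heps. exists (mkposreal eps Heps). intros dt Hdt Hdt_eps. simpl in Hdt_eps.
  assert (Hquad : Rabs (Rmax 0 (t + dt - c) * Rmax 0 (t + dt - c)
                        - Rmax 0 (t - c) * Rmax 0 (t - c) - 2 * Rmax 0 (t - c) * dt) <= dt * dt).
  { apply Rabs_le. unfold Rmax. destruct (Rle_dec 0 (t + dt - c)), (Rle_dec 0 (t - c)); split; nra. }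
  replace ((_ - _) / dt - _) with ((Rmax 0 (t + dt - c) * Rmax 0 (t + dt - c)
                        - Rmax 0 (t - c) * Rmax 0 (t - c) - 2 * Rmax 0 (t - c) * dt) / dt)
    by (field; exact Hdt).
  assert (Hpos : 0 < Rabs dt) by (apply Rabs_pos_lt; auto).
  rewrite Rabs_div by auto. apply Rle_lt_trans with (Rabs dt); [|exact Hdt_eps].
  apply Rmult_le_reg_r with (Rabs dt); auto.
  unfold Rdiv. rewrite Rmult_assoc, Rinv_l, Rmult_1_r by lra.
  rewrite <- Rabs_mult, (Rabs_right (dt * dt)); [lra| nra].
Qed.

Lemma continuity_pos_part c : continuity (fun t => Rmax 0 (t - c)).
Proof.
  intros x. apply continuity_pt_eps. intros eps Heps. exists eps. split; auto.
  intros y Hy. eapply Rle_lt_trans; [|exact Hy].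
  unfold Rmax. repeat destruct Rle_dec; unfold Rabs; repeat destruct Rcase_abs; lra.
Qed.

Lemma continuity_pt_exists_gt_before g x y : x < y -> continuity_pt g y -> g x < g y ->
  exists y', x < y' < y /\ g x < g y'.
Proof.
  intros Hxy Hg Hgxy.
  destruct (proj1 (continuity_pt_eps g y) Hg (g y - g x)) as [d [Hd Hgd]]; [lra|].
  set (y' := Rmax ((x + y) / 2) (y - d / 2)).
  assert (Hy' : x < y' < y /\ y - y' < d) by (unfold y', Rmax; destruct Rle_dec; lra).
  exists y'. split; [tauto|]. specialize (Hgd y' ltac:(apply Rabs_def1; lra)).
  apply Rabs_def2 in Hgd. lra.
Qed.

Section Subsolution.
Variables (h : R -> R -> R) (a : R) (w : R -> R).
Hypotheses (Hok : ham_ok h) (Hv : visc_sub h a I01o w) (Hw : continuous_on01 w).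

Lemma visc_sub_interior_max x y t0 phi dphi : 0 <= x -> y <= 1 -> x <= t0 <= y ->
  (forall t, derivable_pt_lim phi t (dphi t)) -> continuity dphi ->
  w x - phi x < w t0 - phi t0 -> w y - phi y < w t0 - phi t0 ->
  exists ts, x < ts < y /\ h ts (dphi ts) <= a.
Proof.
  intros Hx Hy Ht0 Hphi Hdphi Hgx Hgy.
  set (G := fun t => w (clamp01 t) - phi t).
  assert (HG : forall t, x <= t <= y -> G t = w t - phi t).
  { intros t Ht. unfold G. rewrite clamp01_id; auto. unfold I01; lra. }
  assert (HGc : forall t, x <= t <= y -> continuity_pt G t).
  { intros t _. apply continuity_pt_minus; [apply continuity_clamp01; auto|].
    apply derivable_continuous_pt. exists (dphi t). apply Hphi. }
  destruct (continuity_ab_maj G x y ltac:(lra) HGc) as [ts [Hmax Hts]].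
  pose proof (Hmax t0 Ht0). rewrite !HG in * by lra.
  assert (Htsin : x < ts < y) by (split; apply Rnot_le_lt; intros Hc;
    [assert (ts = x) by lra | assert (ts = y) by lra]; subst ts; lra).
  exists ts. split; auto.
  apply (proj2 (Hv ts ltac:(unfold I01o; lra)) phi dphi Hphi Hdphi).
  exists (Rmin (ts - x) (y - ts)). split; [apply Rmin_pos; lra|].
  intros t Hts'. pose proof (Rmin_l (ts - x) (y - ts)). pose proof (Rmin_r (ts - x) (y - ts)).
  apply Rabs_def2 in Hts'. specialize (Hmax t ltac:(lra)). rewrite HG in Hmax by lra. exact Hmax.
Qed.

(* A parabola steeper than the oscillation of [w] on a short interval around [s] puts the
   maximum of [w - phi] strictly inside it. *)
Lemma visc_sub_sublevel_near s eps : I01 s -> 0 < eps ->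
  exists t p, I01 t /\ Rabs (t - s) < eps /\ h t p <= a.
Proof.
  intros Hs Heps.
  set (r := Rmin eps 1 / 4).
  assert (Hr : 0 < r /\ 4 * r <= eps /\ 4 * r <= 1)
    by (unfold r; pose proof (Rmin_l eps 1); pose proof (Rmin_r eps 1);
        pose proof (Rmin_pos eps 1 Heps Rlt_0_1); lra).
  set (x := Rmax 0 (s - 2 * r)). set (y := x + 2 * r). set (m := x + r).
  assert (Hxy : 0 <= x /\ y <= 1 /\ x <= s <= y)
    by (unfold y, x, Rmax, I01 in *; destruct Rle_dec; lra).
  set (wc := fun t => w (clamp01 t)).
  assert (Hwc : forall t, x <= t <= y -> continuity_pt wc t)
    by (intros t _; apply continuity_clamp01; auto).
  assert (HwcI : forall t, x <= t <= y -> wc t = w t)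
    by (intros t Ht; unfold wc; rewrite clamp01_id; auto; unfold I01; lra).
  destruct (continuity_ab_maj wc x y ltac:(lra) Hwc) as [tM [HM HtM]].
  destruct (continuity_ab_min wc x y ltac:(lra) Hwc) as [tm [Hm Htm]].
  set (K := (wc tM - wc tm + 1) / (r * r)).
  assert (HK : K * (r * r) = wc tM - wc tm + 1) by (unfold K; field; lra).
  set (phi := fun t => K * ((t - m) * (t - m))).
  assert (Hend : forall z, z = x \/ z = y -> w z - phi z < w m - phi m).
  { intros z Hz. unfold phi.
    replace ((z - m) * (z - m)) with (r * r) by (unfold m, y in *; destruct Hz; subst; ring).
    replace ((m - m) * (m - m)) with 0 by ring.
    rewrite <- !HwcI by (unfold m, y in *; lra).
    pose proof (HM z ltac:(destruct Hz; subst; unfold y; lra)).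
    pose proof (Hm m ltac:(unfold m, y; lra)). lra. }
  assert (Hphi : forall t, derivable_pt_lim phi t (2 * K * (t - m)))
    by (intros t; apply is_derive_Reals; unfold phi; auto_derive; auto; ring).
  assert (Hdphi : continuity (fun t => 2 * K * (t - m))).
  { intros t. apply derivable_continuous_pt. exists (2 * K). apply is_derive_Reals.
    auto_derive; auto. ring. }
  destruct (visc_sub_interior_max x y m phi _ (proj1 Hxy) (proj1 (proj2 Hxy))
              ltac:(unfold m, y; lra) Hphi Hdphi (Hend x (or_introl eq_refl))
              (Hend y (or_intror eq_refl))) as [t [Ht Hta]].
  exists t, (2 * K * (t - m)). split; [unfold I01, y in *; lra|].
  split; auto. apply Rabs_def1; unfold y in *; lra.
Qed.

Lemma visc_sub_sublevel_nonempty t : I01 t -> exists p, h t p <= a.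
Proof.
  intros Ht. apply (ham_sublevel_closed h a t (proj1 Hok) (proj1 (proj2 Hok)) Ht).
  intros eps Heps. apply visc_sub_sublevel_near; auto.
Qed.

Lemma sigma_ext_continuous : continuity (sigma_ext h a).
Proof.
  apply continuity_clamp01, sigma_plus_continuous; auto.
  exact visc_sub_sublevel_nonempty.
Qed.

Lemma ex_RInt_sigma_ext x y : ex_RInt (sigma_ext h a) x y.
Proof.
  apply (@ex_RInt_continuous R_CompleteNormedModule). intros z _.
  apply continuity_pt_filterlim, sigma_ext_continuous.
Qed.

Lemma sigma_primitive_derive x : derivable_pt_lim (sigma_primitive h a) x (sigma_ext h a x).
Proof.
  apply is_derive_Reals. apply is_derive_RInt with 0.
  - apply filter_forall. intros b. apply (@RInt_correct R_CompleteNormedModule), ex_RInt_sigma_ext.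
  - apply continuity_pt_filterlim, sigma_ext_continuous.
Qed.

Lemma Rint_sigma_plus s : I01 s -> Rint (sigma_plus h a) 0 s = sigma_primitive h a s.
Proof.
  intros [Hs0 Hs1].
  assert (Heq : forall x, Rmin 0 s < x < Rmax 0 s -> sigma_ext h a x = sigma_plus h a x).
  { intros x Hx. rewrite Rmin_left, Rmax_right in Hx by lra. unfold sigma_ext.
    rewrite clamp01_id; auto. unfold I01; lra. }
  rewrite Rint_RInt.
  - unfold sigma_primitive. symmetry. apply RInt_ext. exact Heq.
  - apply (ex_RInt_ext (sigma_ext h a)); auto. apply ex_RInt_sigma_ext.
Qed.

Local Notation Sigma := (sigma_primitive h a).

(* If [w] out-grew [T] on [x, y], then [w - T] would increase there; adding a barrier that
   vanishes left of some [y'] and is large at [y] moves its maximum into [(x, y)]. The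
   barrier has nonnegative slope, so the test slope there is at least [T' > sigma_plus]. *)
Lemma visc_sub_increment_le_steeper x y T dT : 0 <= x -> x <= y -> y <= 1 ->
  (forall t, derivable_pt_lim T t (dT t)) -> continuity dT ->
  (forall t, x < t < y -> sigma_plus h a t < dT t) ->
  w y - w x <= T y - T x.
Proof.
  intros Hx Hxy Hy HT HdT Hsteep. apply Rnot_lt_le. intros Hlt.
  assert (Hxy' : x < y) by (destruct (Req_dec x y); [subst; lra| lra]).
  set (g := fun t => w (clamp01 t) - T t).
  assert (Hg : forall t, x <= t <= y -> g t = w t - T t)
    by (intros t Ht; unfold g; rewrite clamp01_id; auto; unfold I01; lra).
  assert (Hgxy : g x < g y) by (rewrite !Hg by lra; lra).
  destruct (continuity_pt_exists_gt_before g x y Hxy') as [y' [Hy' Hgy']]; auto.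
  { apply continuity_pt_minus; [apply continuity_clamp01; auto|].
    apply derivable_continuous_pt. eexists. apply HT. }
  set (K := (g y - g x + 1) / ((y - y') * (y - y'))).
  assert (HK : 0 < K /\ K * ((y - y') * (y - y')) = g y - g x + 1)
    by (split; [apply Rdiv_lt_0_compat; nra| unfold K; field; lra]).
  rewrite !Hg in HK, Hgy' by lra.
  set (beta := fun t => K * (Rmax 0 (t - y') * Rmax 0 (t - y'))).
  assert (Hbeta0 : forall t, t <= y' -> beta t = 0)
    by (intros t Ht; unfold beta; rewrite Rmax_left by lra; ring).
  set (dphi := fun t => dT t + K * (2 * Rmax 0 (t - y'))).
  assert (Hphi : forall t, derivable_pt_lim (fun t => T t + beta t) t (dphi t)).
  { intros t. apply derivable_pt_lim_plus; [apply HT|].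
    apply derivable_pt_lim_scal, pos_part_sqr_derive. }
  assert (Hdphi : continuity dphi)
    by (apply continuity_plus; [|apply continuity_scal, continuity_scal, continuity_pos_part]; auto).
  destruct (visc_sub_interior_max x y y' _ dphi Hx Hy ltac:(lra) Hphi Hdphi)
    as [ts [Hts Hhts]].
  - rewrite !Hbeta0 by lra. lra.
  - rewrite (Hbeta0 y') by lra. unfold beta. rewrite Rmax_right by lra. lra.
  - pose proof (sublevel_le_sigma_plus h a Hok ts _ ltac:(unfold I01; lra) Hhts).
    pose proof (Hsteep ts Hts).
    assert (0 <= K * (2 * Rmax 0 (ts - y'))) by (pose proof (Rmax_l 0 (ts - y')); nra).
    unfold dphi in *. lra.
Qed.

Lemma visc_sub_increment_le x y : 0 <= x -> x <= y -> y <= 1 ->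
  w y - w x <= Sigma y - Sigma x.
Proof.
  intros Hx Hxy Hy.
  assert (Hlam : forall lam, 0 < lam -> w y - w x <= Sigma y - Sigma x + lam * (y - x)).
  { intros lam Hlam.
    replace (Sigma y - Sigma x + lam * (y - x)) with ((Sigma y + lam * y) - (Sigma x + lam * x))
      by ring.
    apply (visc_sub_increment_le_steeper x y (fun t => Sigma t + lam * t)
             (fun t => sigma_ext h a t + lam)); auto.
    - intros t. apply derivable_pt_lim_plus; [apply sigma_primitive_derive|].
      apply is_derive_Reals. auto_derive; auto. ring.
    - apply continuity_plus; [apply sigma_ext_continuous| apply continuity_const; intros ? ?; auto].
    - intros t Ht. unfold sigma_ext. rewrite clamp01_id by (unfold I01; lra). lra. }
  destruct (Req_dec x y) as [<-|Hne]; [lra|].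
  apply Rnot_lt_le. intros Hlt.
  set (lam := (w y - w x - (Sigma y - Sigma x)) / (2 * (y - x))).
  assert (Hhalf : lam * (y - x) = (w y - w x - (Sigma y - Sigma x)) / 2)
    by (unfold lam; field; lra).
  specialize (Hlam lam ltac:(apply Rdiv_lt_0_compat; lra)). lra.
Qed.

Lemma visc_sub_tight_edge : w 1 - w 0 = Sigma 1 ->
  forall s, I01 s -> w s = w 0 + Sigma s.
Proof.
  intros Htight s [Hs0 Hs1].
  pose proof (visc_sub_increment_le 0 s ltac:(lra) Hs0 Hs1).
  pose proof (visc_sub_increment_le s 1 Hs0 Hs1 ltac:(lra)).
  rewrite sigma_primitive_0 in *. lra.
Qed.

Lemma visc_sub_tight_derive : (forall s, I01 s -> w s = w 0 + Sigma s) ->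
  forall s0, I01o s0 -> derivable_pt_lim w s0 (sigma_plus h a s0).
Proof.
  intros Heq s0 [Hs0 Hs1]. apply is_derive_Reals.
  apply (is_derive_ext_loc (fun t => w 0 + Sigma t)).
  - apply (locally_interval _ s0 0 1); simpl; auto.
    intros t Ht0 Ht1. symmetry. apply Heq. unfold I01; simpl in *; lra.
  - apply is_derive_Reals.
    replace (sigma_plus h a s0) with (0 + sigma_ext h a s0)
      by (unfold sigma_ext; rewrite clamp01_id; [ring| unfold I01; lra]).
    apply derivable_pt_lim_plus; [apply derivable_pt_lim_const| apply sigma_primitive_derive; auto].
Qed.

End Subsolution.

Fixpoint sum_upto (f : nat -> R) (n : nat) : R :=
  match n with O => 0 | S k => sum_upto f k + f k end.

Lemma sum_upto_ext f g n : (forall j, (j < n)%nat -> f j = g j) -> sum_upto f n = sum_upto g n.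
Proof.
  induction n as [|n IH]; intros Hfg; simpl; auto.
  rewrite IH by (intros; apply Hfg; lia). rewrite Hfg by lia. reflexivity.
Qed.

Lemma sum_upto_telescope F n : sum_upto (fun j => F (S j) - F j) n = F n - F O.
Proof. induction n as [|n IH]; simpl; [|rewrite IH]; ring. Qed.

Lemma sum_upto_succ_l f n : sum_upto f (S n) = f O + sum_upto (fun j => f (S j)) n.
Proof. induction n as [|n IH]; simpl in *; [|rewrite IH]; ring. Qed.

Lemma fold_right_sum_upto {A : Type} (g : A -> R) l d :
  fold_right (fun x acc => g x + acc) 0 l = sum_upto (fun j => g (nth j l d)) (length l).
Proof.
  induction l as [|x l IH]; [reflexivity|].
  change (length (x :: l)) with (S (length l)). rewrite sum_upto_succ_l.
  simpl. rewrite IH. reflexivity.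
Qed.

Lemma sum_upto_le f g n : (forall j, (j < n)%nat -> f j <= g j) -> sum_upto f n <= sum_upto g n.
Proof.
  induction n as [|n IH]; intros Hfg; simpl; [lra|].
  pose proof (IH ltac:(intros; apply Hfg; lia)). pose proof (Hfg n ltac:(lia)). lra.
Qed.

Lemma sum_upto_eq_termwise f g n : sum_upto f n = sum_upto g n ->
  (forall j, (j < n)%nat -> f j <= g j) -> forall j, (j < n)%nat -> f j = g j.
Proof.
  induction n as [|n IH]; intros Hs Hfg j Hj; [lia|]. simpl in Hs.
  pose proof (sum_upto_le f g n ltac:(intros; apply Hfg; lia)).
  pose proof (Hfg n ltac:(lia)).
  destruct (Nat.eq_dec j n) as [->|Hne]; [lra|].
  apply IH; [lra| intros k Hk; apply Hfg; lia| lia].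
Qed.

Lemma cycle_increments_sum N Ed (arc : Ed -> R -> Vec N) (f : Vec N -> R) xi d :
  is_cycle arc xi ->
  sum_upto (fun j => f (arc (nth j xi d) 1) - f (arc (nth j xi d) 0)) (length xi) = 0.
Proof.
  intros [Hnil Hcyc]. set (n := length xi).
  assert (Hn : n <> O) by (unfold n; destruct xi; [congruence| simpl; lia]).
  rewrite (sum_upto_ext _ (fun j => f (arc (nth (S j mod n) xi d) 0)
                                   - f (arc (nth (j mod n) xi d) 0))).
  - rewrite (sum_upto_telescope (fun j => f (arc (nth (j mod n) xi d) 0))).
    rewrite Nat.Div0.mod_same, Nat.Div0.mod_0_l. ring.
  - intros j Hj. rewrite (Nat.mod_small j n), (Hcyc j d Hj) by auto. reflexivity.
Qed.

Lemma aubry_edge_tight N Ed (arc : Ed -> R -> Vec N) H c (f : Vec N -> R) e :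
  (forall e', f (arc e' 1) - f (arc e' 0) <= sigma_edge H c e') ->
  aubry_edge arc H c e -> f (arc e 1) - f (arc e 0) = sigma_edge H c e.
Proof.
  intros Hle [xi [Hcyc [Hin Hsum]]].
  destruct (In_nth xi e e Hin) as [j [Hj <-]].
  apply (sum_upto_eq_termwise (fun j => f (arc (nth j xi e) 1) - f (arc (nth j xi e) 0))
           (fun j => sigma_edge H c (nth j xi e)) (length xi)); auto.
  rewrite cycle_increments_sum by auto.
  unfold sigma_cycle in Hsum. rewrite (fold_right_sum_upto _ _ e) in Hsum. auto.
Qed.

Theorem theorem7p5 (N : nat) (Ed : Type) (edges : list Ed)
  (arc : Ed -> R -> Vec N) (rev : Ed -> Ed)
  (H : Ed -> R -> R -> R) (a_ c_ : Ed -> R) (a0 c : R) (u : Vec N -> R) :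
  is_network N Ed edges arc rev ->
  ham_family arc rev H a_ c_ a0 ->
  is_critical arc H a0 c ->
  network_sub arc H c u ->
  forall e, aubry_edge arc H c e ->
    (forall s, I01 s -> u (arc e s) = u (arc e 0) + Rint (sigma_plus (H e) c) 0 s) /\
    (forall s0, I01o s0 ->
       derivable_pt_lim (fun s => u (arc e s)) s0 (sigma_plus (H e) c s0) /\
       continuity_pt (fun s => sigma_plus (H e) c s) s0).
Proof.
  intros Hnet [Hok _] _ [Hu Hv] e Haub.
  assert (Hw : forall e', continuous_on01 (fun s => u (arc e' s)))
    by (intros e'; eapply cont_on_network_along_arc; eauto).
  assert (Hedge : forall e', sigma_edge H c e' = sigma_primitive (H e') c 1)
    by (intros e'; apply Rint_sigma_plus with (w := fun s => u (arc e' s)); auto; unfold I01; lra).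
  assert (Hincr : forall e', u (arc e' 1) - u (arc e' 0) <= sigma_edge H c e').
  { intros e'. rewrite Hedge.
    pose proof (visc_sub_increment_le (H e') c _ (Hok e') (Hv e') (Hw e') 0 1 ltac:(lra)
                  ltac:(lra) ltac:(lra)).
    rewrite sigma_primitive_0 in *. lra. }
  pose proof (aubry_edge_tight N Ed arc H c u e Hincr Haub) as Htight.
  rewrite Hedge in Htight.
  pose proof (visc_sub_tight_edge (H e) c _ (Hok e) (Hv e) (Hw e) Htight) as Hprofile.
  split.
  - intros s Hs. rewrite (Rint_sigma_plus (H e) c (fun s => u (arc e s))); auto.
  - intros s0 Hs0. split.
    + apply (visc_sub_tight_derive (H e) c _ (Hok e) (Hv e) (Hw e) Hprofile s0 Hs0).
    + apply continuous_on01_interior; auto. apply sigma_plus_continuous; auto.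
      apply (visc_sub_sublevel_nonempty _ _ _ (Hok e) (Hv e) (Hw e)).
Qed.
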